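(* Let $\epsilon\in(0,\frac12)$, $S\in\mathbb{R}^{m\times n}$, and $A\in\mathbb{R}^{n\times d}$ of full column rank, and let $SA=QR$ be a QR-decomposition of $SA$ (with $Q$ having orthonormal columns and $R\in\mathbb{R}^{d\times d}$ invertible). If $\|(AR^{-1})^\top AR^{-1}-I\|_{\mathrm{op}}\le\epsilon$, then $S$ is a $(1\pm\epsilon)$-subspace embedding of $\mathrm{col}(A)$, i.e., $(1-\epsilon)\|Ax\|_2\le\|SAx\|_2\le(1+\epsilon)\|Ax\|_2$ for all $x\in\mathbb{R}^d$.
   Context: $\|\cdot\|_{\mathrm{op}}$ is the spectral (operator) norm; $\mathrm{col}(A)$ is the column space of $A$. *)

From HB Require Import structures.
From mathcomp Require Import all_boot all_order all_algebra.
From mathcomp Require Import all_classical all_reals.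
Set Implicit Arguments. Unset Strict Implicit. Unset Printing Implicit Defensive.
Import Order.TTheory GRing.Theory Num.Theory.
Local Open Scope ring_scope.
Local Open Scope classical_set_scope.

Definition vnorm (R : realType) (k : nat) (v : 'cV[R]_k) : R :=
  Num.sqrt (\sum_(i < k) v i 0 ^+ 2).

Definition opnorm (R : realType) (p q : nat) (M : 'M[R]_(p, q)) : R :=
  sup [set vnorm (M *m x) | x in [set x : 'cV[R]_q | vnorm x <= 1]].

(* Put y := Rm x and U := A Rm^-1. Then S A x = Q y, so |S A x| = |y| since Q
   has orthonormal columns, while A x = U y gives
   |A x|^2 - |y|^2 = y^T (U^T U - 1) y, which by Cauchy-Schwarz is at most
   eps |y|^2 in absolute value. Taking square roots in
   (1 - eps) |y|^2 <= |A x|^2 <= (1 + eps) |y|^2 yields the claim as soon as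
   eps + eps^2 <= 1, which holds for eps < 1/2. *)

From HB Require Import structures.
From mathcomp Require Import all_boot all_order all_algebra.
From mathcomp Require Import all_classical all_reals.
From mathcomp Require Import ring lra.
Import Order.TTheory GRing.Theory Num.Theory.
Local Open Scope ring_scope.
Set Implicit Arguments. Unset Strict Implicit.

Definition vdot {R : pzRingType} {k : nat} (u v : 'cV[R]_k) : R := (u^T *m v) 0 0.

Section Dot.
Variables (R : realFieldType) (k : nat).
Implicit Types u v : 'cV[R]_k.

Lemma vdotE u v : vdot u v = \sum_(i < k) u i 0 * v i 0.
Proof. by rewrite /vdot mxE; apply: eq_bigr => i _; rewrite mxE. Qed.

Lemma vdot_ge0 u : 0 <= vdot u u.
Proof. by rewrite vdotE; apply: sumr_ge0 => i _; rewrite -expr2 sqr_ge0. Qed.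

Lemma vdot_eq0 u : (vdot u u == 0) = (u == 0).
Proof.
apply/eqP/eqP => [|->]; last by rewrite vdotE big1 // => i _; rewrite mxE mul0r.
rewrite vdotE => /psumr_eq0P u0; apply/matrixP => i j.
rewrite ord1 mxE; apply/eqP; rewrite -[_ == 0]orbb -mulf_eq0; apply/eqP.
by apply: u0 => // l _; rewrite -expr2 sqr_ge0.
Qed.

(* This is [0 <= vdot w w] for [w := t *: u - s *: v]. *)
Lemma vdot_le_AMGM u v s t :
  2 * (s * t) * vdot u v <= t ^+ 2 * vdot u u + s ^+ 2 * vdot v v.
Proof.
rewrite !vdotE !mulr_sumr -big_split /=; apply: ler_sum => i _.
have := sqr_ge0 (t * u i 0 - s * v i 0); nra.
Qed.

End Dot.

Section EuclideanNorm.
Variable R : realType.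

Lemma vnormE k (v : 'cV[R]_k) : vnorm v = Num.sqrt (vdot v v).
Proof.
by rewrite /vnorm vdotE; congr Num.sqrt; apply: eq_bigr => i _; rewrite expr2.
Qed.

Lemma vnorm_ge0 k (v : 'cV[R]_k) : 0 <= vnorm v.
Proof. exact: sqrtr_ge0. Qed.

Lemma sqr_vnorm k (v : 'cV[R]_k) : vnorm v ^+ 2 = vdot v v.
Proof. by rewrite vnormE sqr_sqrtr ?vdot_ge0. Qed.

Lemma vnorm_eq0 k (v : 'cV[R]_k) : (vnorm v == 0) = (v == 0).
Proof. by rewrite vnormE sqrtr_eq0 -vdot_eq0 eq_le vdot_ge0 andbT. Qed.

Lemma vnorm0 k : vnorm (0 : 'cV[R]_k) = 0.
Proof. by apply/eqP; rewrite vnorm_eq0. Qed.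

Lemma vnormZ k (c : R) (v : 'cV[R]_k) : vnorm (c *: v) = `|c| * vnorm v.
Proof.
rewrite !vnormE.
have -> : vdot (c *: v) (c *: v) = c ^+ 2 * vdot v v.
  by rewrite !vdotE mulr_sumr; apply: eq_bigr => i _; rewrite !mxE; ring.
by rewrite sqrtrM ?sqr_ge0 // sqrtr_sqr.
Qed.

Lemma CauchySchwarz_vdot k (u v : 'cV[R]_k) : `|vdot u v| <= vnorm u * vnorm v.
Proof.
have [->|u0] := eqVneq u 0.
  by rewrite /vdot trmx0 mul0mx mxE normr0 mulr_ge0 ?vnorm_ge0.
have [->|v0] := eqVneq v 0.
  by rewrite /vdot mulmx0 mxE normr0 mulr_ge0 ?vnorm_ge0.
have uv0 : 0 < vnorm u * vnorm v.
  by rewrite mulr_gt0 // lt_def vnorm_ge0 vnorm_eq0 ?u0 ?v0.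
have := vdot_le_AMGM u v (vnorm u) (vnorm v).
have := vdot_le_AMGM u v (- vnorm u) (vnorm v).
rewrite -!sqr_vnorm sqrrN ler_norml => le1 le2; apply/andP; split; nra.
Qed.

End EuclideanNorm.

Section OperatorNorm.
Variables (R : realType) (p q : nat).

Lemma opnorm_has_sup (M : 'M[R]_(p, q)) :
  has_sup [set vnorm (M *m x) | x in [set x : 'cV[R]_q | vnorm x <= 1]].
Proof.
split; first by exists (vnorm (M *m 0)), 0; rewrite //= vnorm0 ler01.
exists (Num.sqrt (\sum_(i < p) vnorm (row i M)^T ^+ 2)) => _ [x /= x1 <-].
rewrite vnormE vdotE; apply: ler_wsqrtr; apply: ler_sum => i _.
have Mxi : (M *m x) i 0 = vdot (row i M)^T x.
  by rewrite vdotE mxE; apply: eq_bigr => j _; rewrite !mxE.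
have := CauchySchwarz_vdot (row i M)^T x; rewrite -Mxi => Mxi_le.
rewrite -expr2 -real_normK ?num_real // ler_sqr ?nnegrE ?vnorm_ge0 //.
by rewrite (le_trans Mxi_le) // ler_piMr ?vnorm_ge0.
Qed.

Lemma vnorm_mulmx_le_opnorm (M : 'M[R]_(p, q)) y :
  vnorm (M *m y) <= opnorm M * vnorm y.
Proof.
have [->|y0] := eqVneq y 0; first by rewrite mulmx0 !vnorm0 mulr0.
have ny : 0 < vnorm y by rewrite lt_def vnorm_eq0 y0 vnorm_ge0.
have ny1 : vnorm ((vnorm y)^-1 *: y) = 1.
  by rewrite vnormZ ger0_norm ?invr_ge0 ?vnorm_ge0 // mulVf ?gt_eqF.
have Mz : vnorm (M *m ((vnorm y)^-1 *: y)) <= opnorm M.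
  apply: (sup_upper_bound (opnorm_has_sup M)).
  by exists ((vnorm y)^-1 *: y); rewrite /= ?ny1.
move: Mz; rewrite -scalemxAr vnormZ ger0_norm ?invr_ge0 ?vnorm_ge0 //.
by rewrite mulrC ler_pdivrMr.
Qed.

End OperatorNorm.

Section NearIsometry.
Variable R : realType.

Lemma vnorm_mulmx_orthonormal p q (Q : 'M[R]_(p, q)) y :
  Q^T *m Q = 1%:M -> vnorm (Q *m y) = vnorm y.
Proof.
by move=> QtQ; rewrite !vnormE /vdot trmx_mul mulmxA -(mulmxA y^T) QtQ mulmx1.
Qed.

Lemma quadratic_form_le_opnorm p (M : 'M[R]_p) y :
  `|vdot y (M *m y)| <= opnorm M * vnorm y ^+ 2.
Proof.
rewrite (le_trans (CauchySchwarz_vdot _ _)) // mulrC expr2 mulrA.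
by rewrite ler_wpM2r ?vnorm_ge0 // vnorm_mulmx_le_opnorm.
Qed.

Lemma sqr_vnorm_mulmx_sub p q (U : 'M[R]_(p, q)) y :
  vnorm (U *m y) ^+ 2 - vnorm y ^+ 2 = vdot y ((U^T *m U - 1%:M) *m y).
Proof.
rewrite !sqr_vnorm /vdot mulmxBl mul1mx mulmxBr trmx_mul !mulmxA.
by rewrite [RHS]mxE [X in _ = _ + X]mxE.
Qed.

Lemma near_isometry_sqr_vnorm p q (U : 'M[R]_(p, q)) (eps : R) y :
  opnorm (U^T *m U - 1%:M) <= eps ->
  (1 - eps) * vnorm y ^+ 2 <= vnorm (U *m y) ^+ 2 <= (1 + eps) * vnorm y ^+ 2.
Proof.
move=> Ueps; have := quadratic_form_le_opnorm (U^T *m U - 1%:M) y.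
rewrite -sqr_vnorm_mulmx_sub ler_norml => /andP[lo hi].
have y2 := sqr_ge0 (vnorm y); apply/andP; split; nra.
Qed.

End NearIsometry.

Lemma distortion_le_of_sqr (R : realFieldType) (e a b : R) :
  0 <= e -> e + e ^+ 2 <= 1 -> 0 <= a -> 0 <= b ->
  (1 - e) * b ^+ 2 <= a ^+ 2 <= (1 + e) * b ^+ 2 ->
  (1 - e) * a <= b <= (1 + e) * a.
Proof.
move=> e0 e1 a0 b0 /andP[lo hi]; apply/andP; split.
  rewrite -ler_sqr ?nnegrE ?mulr_ge0 //; last by nra.
  have := ler_wpM2l (sqr_ge0 (1 - e)) hi; nra.
rewrite -ler_sqr ?nnegrE ?mulr_ge0 //; last by nra.
have := ler_wpM2l (sqr_ge0 (1 + e)) lo; nra.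
Qed.

Theorem mainTheorem4 (R : realType) (m n d : nat) (eps : R)
  (S : 'M[R]_(m, n)) (A : 'M[R]_(n, d)) (Q : 'M[R]_(m, d)) (Rm : 'M[R]_d) :
  0 < eps -> eps < 1 / 2 ->
  \rank A = d ->
  Q^T *m Q = 1%:M ->
  Rm \in unitmx ->
  S *m A = Q *m Rm ->
  opnorm ((A *m invmx Rm)^T *m (A *m invmx Rm) - 1%:M) <= eps ->
  forall x : 'cV[R]_d,
    (1 - eps) * vnorm (A *m x) <= vnorm (S *m A *m x) /\
    vnorm (S *m A *m x) <= (1 + eps) * vnorm (A *m x).
Proof.
move=> eps_gt0 eps_lt_half _ QtQ Rm_unit SA_QR U_near x.
set y := Rm *m x.
have -> : S *m A *m x = Q *m y by rewrite SA_QR -mulmxA.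
have -> : A *m x = (A *m invmx Rm) *m y.
  by rewrite mulmxA -(mulmxA A) mulVmx ?mulmx1.
rewrite (vnorm_mulmx_orthonormal _ QtQ); apply/andP.
apply: distortion_le_of_sqr; rewrite ?vnorm_ge0 ?(ltW eps_gt0) //; first by nra.
exact: near_isometry_sqr_vnorm.
Qed.
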